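(* Let $\mathbb{M}$ be a monster model of $T_{f,ab}$. The group $(\mathbb{M},+)$ has no Kim-generic elements over $\langle \emptyset \rangle$: for every $a\in \mathbb{M}$ there is $b$ such that $a$ is algebraically independent from $b$ over $\langle \emptyset \rangle$ (that is, $\langle a\rangle \cap \langle b\rangle = \langle\emptyset\rangle$), while $a+b$ is not algebraically independent from $b$ over $\langle \emptyset \rangle$. (One may take $b$ with $\langle a\rangle\cap\langle b\rangle=\langle\emptyset\rangle$ and with $f$ equal to $0$ everywhere on $\langle a,b\rangle\setminus\langle a\rangle$ except $f(a+b)=b$.)
   Context: $T_{f,ab}$ is the model completion of the theory of abelian groups with a generic unary function $f$ satisfying $f(0)=0$, in the language $L=\{+,0,f\}$; it is NSOP$_1$ with existence and has quantifier elimination. In a monster model $\mathbb{M}$ of $T_{f,ab}$, the algebraic closure of a set is the substructure it generates (denoted $\langle\cdot\rangle$), and Kim-forking independence coincides with algebraic independence ($A$ is algebraically independent from $B$ over $C$ iff $\mathrm{acl}(AC)\cap\mathrm{acl}(BC)=\mathrm{acl}(C)$). For a group $(G,\cdot)$ definable over $E$ in a model of an NSOP$_1$ theory with existence and $E\subseteq B$, an element $a\in G$ is Kim-generic in $G$ over $B$ if $a\cdot b$ is Kim-independent from $b$ over $B$ for every $b\in G$ such that $a$ is Kim-independent from $b$ over $B$. *)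

From HB Require Import structures.
From mathcomp Require Import all_boot all_order all_algebra.
Set Implicit Arguments. Unset Strict Implicit. Unset Printing Implicit Defensive.
Import GRing.Theory.
Local Open Scope ring_scope.

Inductive term : Type :=
| tVar : nat -> term
| tZero : term
| tAdd : term -> term -> term
| tOpp : term -> term
| tF : term -> term.

Fixpoint teval (G : zmodType) (f : G -> G) (s : seq G) (t : term) : G :=
  match t with
  | tVar i => nth 0 s i
  | tZero => 0
  | tAdd t1 t2 => teval f s t1 + teval f s t2
  | tOpp t1 => - teval f s t1
  | tF t1 => f (teval f s t1)
  end.

Definition Lembedding (G H : zmodType) (f : G -> G) (g : H -> H) (h : G -> H) :=
  [/\ injective h, h 0 = 0, {morph h : x y / x + y}, {morph h : x / - x}
    & forall x, h (f x) = g (h x)].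

(* "Monster model" of T_{f,ab}: (M, f) is an abelian group with f 0 = 0 such
   that for every extension (N, g) of it (a model of the base theory of abelian
   groups with a unary function fixing 0), every finite tuple v of N has
   a realization w in M of its quantifier-free type over any finite set p of
   parameters from M.  This is exactly "existentially closed (= model of the
   model completion T_{f,ab}) and omega-saturated". *)
Definition monster_fab (M : zmodType) (f : M -> M) : Prop :=
  f 0 = 0 /\
  forall (N : zmodType) (g : N -> N) (h : M -> N),
    g 0 = 0 -> Lembedding f g h ->
    forall (p : seq M) (v : seq N),
      exists w : seq M, size w = size v /\
        forall t1 t2 : term,
          (teval g (map h p ++ v) t1 = teval g (map h p ++ v) t2) <->
          (teval f (p ++ w) t1 = teval f (p ++ w) t2).

(* The substructure <X> generated by X (= acl(X) in T_{f,ab}). *)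
Definition gen (M : zmodType) (f : M -> M) (X : M -> Prop) : M -> Prop :=
  fun x => exists (s : seq M) (t : term),
    (forall i, (i < size s)%N -> X (nth 0 s i)) /\ teval f s t = x.

Definition psetU (M : Type) (A B : M -> Prop) : M -> Prop := fun x => A x \/ B x.
Definition pset1 (M : Type) (a : M) : M -> Prop := fun x => x = a.
Definition set_empty (M : Type) : M -> Prop := fun _ => False.

Definition alg_indep (M : zmodType) (f : M -> M) (A B C : M -> Prop) : Prop :=
  forall x, (gen f (psetU A C) x /\ gen f (psetU B C) x) <-> gen f C x.

From mathcomp Require Import all_boot all_order all_algebra.
Local Open Scope ring_scope.
Set Implicit Arguments. Unset Strict Implicit. Unset Printing Implicit Defensive.
Import GRing.Theory.

(* Extend (M, f) to M * int by a new element e = (0, 1), letting the new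
   function agree with f on M * 0, send a + e to e and vanish elsewhere.  Both
   M * 0 and 0 * int are closed under it, so <a> lies in the former and <e> in
   the latter and they meet in 0, whereas e = f (a + e) lies in <a + e> and <e>
   but not in <empty>, which is contained in M * 0.  Saturation of M realizes
   the quantifier-free type of e over a by some b in M, which carries these
   facts back to M. *)

Fixpoint term_in (P : pred nat) (t : term) : bool :=
  match t with
  | tVar i => P i
  | tZero => true
  | tAdd t1 t2 => term_in P t1 && term_in P t2
  | tOpp t1 | tF t1 => term_in P t1
  end.

Lemma term_in_predT (t : term) : term_in predT t.
Proof. by elim: t => //= t1 -> t2 ->. Qed.

Definition fsubgroup (G : zmodType) (f : G -> G) (S : G -> Prop) : Prop :=
  [/\ S 0, forall x y, S x -> S y -> S (x + y),
      forall x, S x -> S (- x) & forall x, S x -> S (f x)].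

Definition tspan (G : zmodType) (f : G -> G) (s : seq G) (P : pred nat)
    (x : G) : Prop :=
  exists2 t, term_in P t & teval f s t = x.

Section Substructures.
Variables (G : zmodType) (f : G -> G).

Lemma teval_fsubgroup (S : G -> Prop) (s : seq G) (P : pred nat) (t : term) :
  fsubgroup f S -> (forall i, P i -> S (nth 0 s i)) -> term_in P t ->
  S (teval f s t).
Proof.
case=> S0 SD SN Sf SP.
elim: t => [i||t1 IH1 t2 IH2|t1 IH|t1 IH] //=.
- exact: SP.
- by case/andP=> /IH1 + /IH2; apply: SD.
- by move/IH; apply: SN.
- by move/IH; apply: Sf.
Qed.

Lemma gen_min (S X : G -> Prop) (x : G) :
  fsubgroup f S -> (forall y, X y -> S y) -> gen f X x -> S x.
Proof.
move=> Sfs XS [s [t [Xs <-]]].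
apply: (teval_fsubgroup Sfs _ (term_in_predT t)) => i _.
have [/Xs/XS //|le_s_i] := ltnP i (size s).
by rewrite nth_default //; case: Sfs.
Qed.

Lemma gen_mono (X Y : G -> Prop) (x : G) :
  (forall y, X y -> Y y) -> gen f X x -> gen f Y x.
Proof. by move=> XY [s [t [Xs <-]]]; exists s, t; split=> // i /Xs/XY. Qed.

Lemma gen0 (X : G -> Prop) : gen f X 0.
Proof. by exists [::], tZero. Qed.

Lemma fsubgroup_tspan (s : seq G) (P : pred nat) : fsubgroup f (tspan f s P).
Proof.
split.
- by exists tZero.
- by move=> _ _ [t1 P1 <-] [t2 P2 <-]; exists (tAdd t1 t2); rewrite //= P1.
- by move=> _ [t Pt <-]; exists (tOpp t).
- by move=> _ [t Pt <-]; exists (tF t).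
Qed.

Lemma gen_empty_tspan (s : seq G) (P : pred nat) (x : G) :
  gen f (@set_empty G) x -> tspan f s P x.
Proof. exact: gen_min (fsubgroup_tspan s P) (fun _ => False_ind _). Qed.

Lemma gen_gen_empty_tspan (s : seq G) (P : pred nat) (x : G) :
  gen f (gen f (@set_empty G)) x -> tspan f s P x.
Proof. exact: gen_min (fsubgroup_tspan s P) (@gen_empty_tspan s P). Qed.

Lemma gen_var_tspan (s : seq G) (i : nat) (x : G) :
  gen f (psetU (pset1 (nth 0 s i)) (gen f (@set_empty G))) x ->
  tspan f s (pred1 i) x.
Proof.
apply: gen_min (fsubgroup_tspan _ _) _ => y [->|]; last exact: gen_empty_tspan.
by exists (tVar i) => /=.
Qed.

Lemma alg_indepP (A B C : G -> Prop) :
  alg_indep f A B C <->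
  (forall x, gen f (psetU A C) x -> gen f (psetU B C) x -> gen f C x).
Proof.
split=> [indep x xA xB | capC x]; first by apply/indep.
split=> [[]|xC]; first exact: capC.
by split; apply: gen_mono xC => y; right.
Qed.

End Substructures.

Section Extension.
Variables (M : zmodType) (f : M -> M) (a : M).
Hypothesis f0 : f 0 = 0.

Definition ext_fun (x : M * int) : M * int :=
  if x.2 == 0 then (f x.1, 0) else if x == (a, 1) then (0, 1) else 0.

Lemma ext_fun0 : ext_fun 0 = 0.
Proof. by rewrite /ext_fun /= f0. Qed.

Lemma Lembedding_ext : Lembedding f ext_fun (fun m => (m, 0)).
Proof. by split=> // x y []. Qed.

Lemma ext_fun_new : ext_fun ((a, 0) + (0, 1)) = (0, 1).
Proof.
have -> : (a, 0) + (0, 1) = (a, 1) :> M * int by congr (_, _); rewrite /= addr0.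
by rewrite /ext_fun /= eqxx.
Qed.

Lemma fsubgroup_ext_base : fsubgroup ext_fun (fun x => x.2 = 0).
Proof.
split=> //= [x y -> ->|x ->|x x2]; rewrite ?addr0 ?oppr0 //.
by rewrite /ext_fun x2 eqxx.
Qed.

Lemma fsubgroup_ext_new : fsubgroup ext_fun (fun x => x.1 = 0).
Proof.
split=> //= [x y -> ->|x ->|[x1 x2] /= ->]; rewrite ?addr0 ?oppr0 //.
by rewrite /ext_fun; case: ifP => _; [rewrite f0 | case: ifP].
Qed.

End Extension.

Section Witness.
Variables (M : zmodType) (f : M -> M) (a b : M).
Hypothesis f0 : f 0 = 0.
Let e : seq (M * int) := [:: (a, 0); (0, 1)].
Hypothesis transfer : forall t1 t2 : term,
  teval (ext_fun f a) e t1 = teval (ext_fun f a) e t2 <->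
  teval f [:: a; b] t1 = teval f [:: a; b] t2.

Lemma f_add_witness : f (a + b) = b.
Proof. exact/(transfer (tF (tAdd (tVar 0) (tVar 1))) (tVar 1))/ext_fun_new. Qed.

Lemma gen_cap_witness (x : M) :
  gen f (psetU (pset1 a) (gen f (@set_empty M))) x ->
  gen f (psetU (pset1 b) (gen f (@set_empty M))) x -> x = 0.
Proof.
move=> /(@gen_var_tspan _ _ [:: a; b] 0) [t1 t1a <-].
move=> /(@gen_var_tspan _ _ [:: a; b] 1) [t2 t2b /esym /transfer eq_t12].
apply/(transfer t1 tZero); rewrite /= eq_t12.
have: (teval (ext_fun f a) e t1).2 = 0.
  by apply: (teval_fsubgroup (fsubgroup_ext_base f a)) t1a => i /eqP ->.
have: (teval (ext_fun f a) e t2).1 = 0.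
  by apply: (teval_fsubgroup (fsubgroup_ext_new a f0)) t2b => i /eqP ->.
by rewrite -eq_t12; case: (teval _ _ t1) => /= y1 y2 -> ->.
Qed.

Lemma witness_notin_gen_empty : ~ gen f (gen f (@set_empty M)) b.
Proof.
move=> /(@gen_gen_empty_tspan _ _ [:: a; b] pred0) [t t0 /esym tb].
have: (teval (ext_fun f a) e t).2 = 0.
  by apply: (teval_fsubgroup (fsubgroup_ext_base f a)) t0.
by rewrite -(transfer (tVar 1) t).2.
Qed.

End Witness.

Theorem mainTheorem2 (M : zmodType) (f : M -> M) :
  monster_fab f ->
  forall a : M, exists b : M,
    alg_indep f (pset1 a) (pset1 b) (gen f (@set_empty M)) /\
    ~ alg_indep f (pset1 (a + b)) (pset1 b) (gen f (@set_empty M)).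
Proof.
move=> [f0 saturated] a.
have [w [size_w transfer]] := saturated _ _ _ (ext_fun0 a f0)
  (Lembedding_ext f a) [:: a] [:: (0, 1)].
case: w size_w transfer => [|b []] // _ transfer.
exists b; split.
  apply/alg_indepP => x xa xb.
  by rewrite (gen_cap_witness f0 transfer xa xb); apply: gen0.
move/alg_indepP => indep; apply: (witness_notin_gen_empty transfer).
apply: indep; last by exists [:: b], (tVar 0); split=> // -[] // _; left.
rewrite -{2}(f_add_witness transfer).
by exists [:: a + b], (tF (tVar 0)); split=> // -[] // _; left.
Qed.
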